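(* Let $(p_x,p'_x)$ and $(p_y,p'_y)$ be pairs of positive integers with $|p_x-p'_x|=|p_y-p'_y|=1$, and let $X=\alpha_{(p_x,p'_x)}(Y)$, $Y=\alpha_{(p_y,p'_y)}(Z)$ be finite Sturmian words, $Z$ a finite word. Then the number of original center occurrences in $X$ (equivalently, of original maximal palindrome occurrences in $X$), relative to $X=\alpha_{(p_x,p'_x)}(Y)$, equals $$2(p_x-1)\bigl(|Z|_a\,p_y+|Z|_b\,p'_y\bigr)+2|Z|\,p'_x.$$
   Context: $\alpha_{(p,p')}$ is the morphism $a\mapsto a^pb$, $b\mapsto a^{p'}b$. A Sturmian word is a right-infinite aperiodic word over $\{a,b\}$ with exactly $n+1$ factors of each length $n$; a finite Sturmian word is a finite factor of one. $|W|_l$ is the number of occurrences of letter $l$ in $W$. A center occurrence in a word is an occurrence of one of the factors $a$, $b$, $aa$; each is the center of exactly one maximal palindrome occurrence. Write $Y=y_1\cdots y_m$ and $X=\alpha(y_1)\cdots\alpha(y_m)$ with $\alpha=\alpha_{(p_x,p'_x)}$, $\alpha(y_j)$ occupying positions $s_j+1,\dots,s_j+|\alpha(y_j)|$, $s_j=\sum_{t<j}|\alpha(y_t)|$. The reflection of an occurrence $y_j=a$ (resp. $y_j=b$) is the center (middle letter if odd length, middle two letters if even length) of the run $a^{p_x}$ (resp. $a^{p'_x}$) at positions $s_j+1,\dots,s_j+p_x$ (resp. $s_j+p'_x$); the reflection of an occurrence $y_jy_{j+1}=aa$ is the letter $b$ at position $s_j+p_x+1$. A center occurrence of $X$ is original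 if it is not the reflection of any center occurrence of $Y$. *)

From HB Require Import structures.
From mathcomp Require Import all_boot.
Set Implicit Arguments. Unset Strict Implicit. Unset Printing Implicit Defensive.

Inductive letter := La | Lb.
Definition letter_eqb (x y : letter) : bool :=
  match x, y with La, La | Lb, Lb => true | _, _ => false end.
Lemma letter_eqP : Equality.axiom letter_eqb.
Proof. by case; case; constructor. Qed.
HB.instance Definition _ := hasDecEq.Build letter letter_eqP.

Definition word := seq letter.

Definition alpha_img (p p' : nat) (l : letter) : word :=
  if l is La then rcons (nseq p La) Lb else rcons (nseq p' La) Lb.
Definition alpha (p p' : nat) (w : word) : word := flatten (map (alpha_img p p') w).

Definition nocc (l : letter) (w : word) : nat := count_mem l w.

Definition iword := nat -> letter.
Definition ifactor (u : iword) (i n : nat) : word := mkseq (fun j => u (i + j)) n.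

Definition nfactors_eq (u : iword) (n k : nat) : Prop :=
  exists s : seq word, uniq s /\ size s = k /\
    forall w, w \in s <-> (size w = n /\ exists i, w = ifactor u i n).

Definition aperiodic (u : iword) : Prop :=
  ~ exists p N, 0 < p /\ forall i, N <= i -> u (i + p) = u i.

Definition sturmian (u : iword) : Prop :=
  aperiodic u /\ forall n, nfactors_eq u n n.+1.

Definition fin_sturmian (w : word) : Prop :=
  exists u, sturmian u /\ exists i, w = ifactor u i (size w).

(* Center occurrences: occurrences of a, b (length 1) or aa (length 2),
   encoded as (0-indexed start position, length). *)
Definition center_occs (w : word) : seq (nat * nat) :=
  [seq (i, 1) | i <- iota 0 (size w)] ++
  [seq (i, 2) | i <- iota 0 (size w).-1 & (nth La w i == La) && (nth La w i.+1 == La)].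

(* s_j (0-indexed j): length of alpha(y_1 ... y_j-th letter excluded). *)
Definition sj (p p' : nat) (Y : word) (j : nat) : nat := size (alpha p p' (take j Y)).

(* Length-1 occurrence at j of letter l: centre of the run a^r (r = p or p')
   occupying 0-indexed positions s_j .. s_j + r - 1: start s_j + (r-1)/2,
   length 1 if r is odd and 2 if r is even.
   Length-2 occurrence aa at j: the letter b at 0-indexed position s_j + p. *)
Definition reflection (p p' : nat) (Y : word) (o : nat * nat) : nat * nat :=
  let j := o.1 in
  if o.2 == 1 then
    let r := if nth La Y j == La then p else p' in
    (sj p p' Y j + r.-1./2, 2 - odd r)
  else (sj p p' Y j + p, 1).

Definition reflections (p p' : nat) (Y : word) : seq (nat * nat) :=
  map (reflection p p' Y) (center_occs Y).

Definition n_original (p p' : nat) (Y : word) : nat :=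
  count (fun o => o \notin reflections p p' Y) (center_occs (alpha p p' Y)).

From HB Require Import structures.
From mathcomp Require Import all_boot zify.
Set Implicit Arguments. Unset Strict Implicit. Unset Printing Implicit Defensive.

(* The reflection map sends the center occurrences of Y injectively into those
   of X = alpha(Y): the reflection of y_j lies in the block alpha(y_j), before
   its final b when y_j is a letter, on that b when y_j y_{j+1} = aa.  Hence
   the original occurrences number |C(X)| - |C(Y)|, where C(w) counts the
   center occurrences of w.  Every letter and every factor aa is one, so
   |C(w)| = |w| + #aa(w); a word made of blocks a^r b with r > 0 has no factor
   aa across blocks, whence |C(alpha_(p,p')(W))| = 2 (|W|_a p + |W|_b p').
   Substituting Y = alpha_(p_y,p'_y)(Z) gives the formula. *)

Lemma count_notin_subset (T : eqType) (C R : seq T) :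
  uniq C -> uniq R -> {subset R <= C} ->
  count (fun x => x \notin R) C = size C - size R.
Proof.
move=> uC uR sRC.
have inR_C : count (mem R) C = size R.
  rewrite -size_filter; apply/perm_size/uniq_perm; rewrite ?filter_uniq //.
  by move=> x; rewrite mem_filter andb_idr //; apply: sRC.
by rewrite -(count_predC (mem R) C) inR_C addKn.
Qed.

Lemma mem_pair_map (s : seq nat) (i k c : nat) :
  ((i, k) \in [seq (x, c) | x <- s]) = (k == c) && (i \in s).
Proof.
apply/mapP/andP => [[x xs [-> ->]]|[/eqP -> ins]]; first by rewrite eqxx.
by exists i.
Qed.

Lemma mem_center_occs (w : word) (i k : nat) :
  ((i, k) \in center_occs w) =
  ((k == 1) && (i < size w)) ||
  [&& k == 2, i.+1 < size w, nth La w i == La & nth La w i.+1 == La].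
Proof.
rewrite /center_occs mem_cat !mem_pair_map mem_filter !mem_iota /= !add0n.
have -> : (i < (size w).-1) = (i.+1 < size w) by lia.
by case: (i.+1 < size w); rewrite ?andbT ?andbF.
Qed.

Lemma center_occs_uniq (w : word) : uniq (center_occs w).
Proof.
rewrite /center_occs cat_uniq !map_inj_uniq ?filter_uniq ?iota_uniq //=;
  try by move=> x y [].
rewrite andbT; apply/hasPn => -[i k] /mapP [x _ [_ ->]].
by apply/mapP => -[y _ [_]].
Qed.

Definition aa_count (w : word) : nat :=
  count (fun i => (nth La w i == La) && (nth La w i.+1 == La)) (iota 0 (size w).-1).

Lemma size_center_occs (w : word) : size (center_occs w) = size w + aa_count w.
Proof. by rewrite /center_occs size_cat !size_map size_iota size_filter. Qed.

Lemma aa_count_cons (x : letter) (w : word) :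
  aa_count (x :: w) = ((x == La) && (head Lb w == La)) + aa_count w.
Proof.
case: w => [|y w]; first by rewrite /aa_count /= andbF.
by rewrite /aa_count /= -add1n iotaDl count_map.
Qed.

Definition run_len (p p' : nat) (l : letter) : nat := if l == La then p else p'.

Definition block (r : nat) : word := rcons (nseq r La) Lb.

Lemma alpha_imgE (p p' : nat) (l : letter) : alpha_img p p' l = block (run_len p p' l).
Proof. by case: l. Qed.

Lemma size_block (r : nat) : size (block r) = r.+1.
Proof. by rewrite size_rcons size_nseq. Qed.

Lemma nth_block (r k : nat) : nth La (block r) k = if k == r then Lb else La.
Proof. by rewrite /block nth_rcons size_nseq nth_nseq; case: ltngtP. Qed.

Lemma aa_count_block_cat (r : nat) (v : word) :
  aa_count (block r ++ v) = r.-1 + aa_count v.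
Proof.
elim: r => [|r IH]; first by rewrite aa_count_cons.
by rewrite /block /= aa_count_cons -/(block r) IH; case: r {IH}.
Qed.

Lemma alpha_cat (p p' : nat) (u v : word) :
  alpha p p' (u ++ v) = alpha p p' u ++ alpha p p' v.
Proof. by rewrite /alpha map_cat flatten_cat. Qed.

Lemma alpha_cons (p p' : nat) (y : letter) (u : word) :
  alpha p p' (y :: u) = block (run_len p p' y) ++ alpha p p' u.
Proof. by rewrite -alpha_imgE. Qed.

Lemma alpha_split (p p' j : nat) (Y : word) : j < size Y ->
  alpha p p' Y =
  alpha p p' (take j Y) ++ block (run_len p p' (nth La Y j)) ++ alpha p p' (drop j.+1 Y).
Proof.
by move=> hj; rewrite -{1}(cat_take_drop j Y) (drop_nth La hj) alpha_cat alpha_cons.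
Qed.

Section AlphaCounts.
Variables p p' : nat.

Lemma nocc_La_alpha (W : word) :
  nocc La (alpha p p' W) = nocc La W * p + nocc Lb W * p'.
Proof.
elim: W => [|y W IH] //; rewrite alpha_cons /nocc count_cat in IH *; rewrite IH.
by rewrite /block -cats1 count_cat count_nseq; case: y; rewrite /run_len /=; lia.
Qed.

Lemma nocc_Lb_alpha (W : word) : nocc Lb (alpha p p' W) = size W.
Proof.
elim: W => [|y W IH] //; rewrite alpha_cons /nocc count_cat in IH *; rewrite IH.
by rewrite /block -cats1 count_cat count_nseq; case: y.
Qed.

Hypotheses (p_gt0 : 0 < p) (p'_gt0 : 0 < p').

Lemma run_len_gt0 (l : letter) : 0 < run_len p p' l.
Proof. by case: l. Qed.

Lemma size_center_occs_alpha (W : word) :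
  size (center_occs (alpha p p' W)) = 2 * (nocc La W * p + nocc Lb W * p').
Proof.
rewrite size_center_occs; elim: W => [|y W IH] //.
rewrite alpha_cons aa_count_block_cat size_cat size_block.
have := run_len_gt0 y; case: y; rewrite /nocc /run_len /= in IH *; lia.
Qed.

End AlphaCounts.

Section Reflection.
Variables (p p' : nat) (Y : word).
Hypotheses (p_gt0 : 0 < p) (p'_gt0 : 0 < p').

Local Notation s := (sj p p' Y).
Local Notation r j := (run_len p p' (nth La Y j)).

Lemma sj_le j k : j <= k -> s j <= s k.
Proof. by move=> /subnKC <-; rewrite /sj takeD alpha_cat size_cat leq_addr. Qed.

Lemma sjS j : j < size Y -> s j.+1 = s j + (r j).+1.
Proof.
move=> hj; rewrite /sj (take_nth La hj) -cats1 alpha_cat size_cat.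
by rewrite alpha_cons size_cat size_block addn0.
Qed.

Lemma nth_alpha_block j k : j < size Y -> k <= r j ->
  nth La (alpha p p' Y) (s j + k) = nth La (block (r j)) k.
Proof.
move=> hj hk; rewrite (alpha_split p p' hj) nth_cat ltnNge leq_addr /= addKn.
by rewrite nth_cat size_block ltnS hk.
Qed.

Lemma block_end_lt_size j : j < size Y -> s j + r j < size (alpha p p' Y).
Proof.
move=> hj; rewrite [in X in _ < X](alpha_split p p' hj) !size_cat size_block /sj; lia.
Qed.

Lemma reflection_letter j :
  reflection p p' Y (j, 1) = (s j + (r j).-1./2, 2 - odd (r j)).
Proof. by []. Qed.

Lemma reflection_aa j : nth La Y j = La -> reflection p p' Y (j, 2) = (s j + r j, 1).
Proof. by rewrite /reflection /run_len => ->. Qed.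

Lemma reflection_center_occ o : o \in center_occs Y ->
  reflection p p' Y o \in center_occs (alpha p p' Y).
Proof.
case: o => j k; rewrite mem_center_occs.
case/orP => [/andP [/eqP -> hj] | /and4P [/eqP -> hj /eqP hLa _]].
- rewrite reflection_letter mem_center_occs.
  have hlt := block_end_lt_size hj.
  have r_gt0 := run_len_gt0 p_gt0 p'_gt0 (nth La Y j).
  case r_odd: (odd (r j)) => /=; first lia.
  have r_even := modn2 (r j); rewrite r_odd in r_even.
  (* an even run has two middle letters, both inside the run *)
  rewrite -addnS !nth_alpha_block ?nth_block; try lia.
  have mid1 : ((r j).-1./2 == r j) = false by lia.
  have mid2 : ((r j).-1./2.+1 == r j) = false by lia.
  by rewrite mid1 mid2 eqxx andbT; lia.
- have hj' : j < size Y by lia.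
  rewrite reflection_aa // mem_center_occs /=.
  have := block_end_lt_size hj'; lia.
Qed.

Lemma reflection_in_block j k : (j, k) \in center_occs Y ->
  [/\ j < size Y, s j <= (reflection p p' Y (j, k)).1 <= s j + r j
    & ((reflection p p' Y (j, k)).1 == s j + r j) = (k == 2)].
Proof.
rewrite mem_center_occs.
case/orP => [/andP [/eqP -> hj] | /and4P [/eqP -> hj /eqP hLa _]].
- rewrite reflection_letter /=; have := run_len_gt0 p_gt0 p'_gt0 (nth La Y j).
  by split=> //; lia.
- rewrite reflection_aa //=; split=> //; lia.
Qed.

Lemma reflections_uniq : uniq (reflections p p' Y).
Proof.
rewrite /reflections map_inj_in_uniq ?center_occs_uniq // => -[j1 k1] [j2 k2] h1 h2 e.
have [hj1 b1 t1] := reflection_in_block h1.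
have [hj2 b2 t2] := reflection_in_block h2.
(* the blocks [s j, s j + r j] of distinct indices are disjoint *)
have ej : j1 = j2.
  case: (ltngtP j1 j2) => // hlt; rewrite ?e in b1 b2.
  - by have := sj_le hlt; rewrite sjS //; lia.
  - by have := sj_le hlt; rewrite sjS //; lia.
subst j2; move: h1 h2 t1 t2; rewrite e !mem_center_occs => h1 h2 -> /eqP.
by case/orP: h1 => /andP [/eqP -> _]; case/orP: h2 => /andP [/eqP -> _].
Qed.

Lemma n_original_eq :
  n_original p p' Y = size (center_occs (alpha p p' Y)) - size (center_occs Y).
Proof.
rewrite /n_original count_notin_subset ?center_occs_uniq ?reflections_uniq //.
  by rewrite size_map.
by move=> o /mapP [o' ho' ->]; apply: reflection_center_occ.
Qed.

End Reflection.

Theorem lemma3 (px px' py py' : nat) (X Y Z : word) :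
  0 < px -> 0 < px' -> 0 < py -> 0 < py' ->
  (* |px - px'| = 1 and |py - py'| = 1 *)
  (px = px'.+1 \/ px' = px.+1) -> (py = py'.+1 \/ py' = py.+1) ->
  X = alpha px px' Y -> Y = alpha py py' Z ->
  fin_sturmian X -> fin_sturmian Y ->
  n_original px px' Y =
    2 * (px - 1) * (nocc La Z * py + nocc Lb Z * py') + 2 * size Z * px'.
Proof.
move=> hpx hpx' hpy hpy' _ _ _ -> _ _.
rewrite n_original_eq // !size_center_occs_alpha // nocc_La_alpha nocc_Lb_alpha.
by case: px hpx => // px _; rewrite subn1 /=; lia.
Qed.
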